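(* Let $k\ge 2$, let $H$ be a finite $k$-uniform hypergraph and let $G$ be the 2-section of $H$. For every nonnegative integer $t$, the graph ${\rm ILT}'_t(G)$ is the 2-section of ${\rm ILTH}_t(H)$.
   Context: The 2-section of a hypergraph is the graph on the same vertex set in which two distinct vertices are adjacent iff some hyperedge contains both. ${\rm ILTH}_t(H)$ is defined by ${\rm ILTH}_0(H)=H$ and: given $H_t={\rm ILTH}_t(H)$, for each vertex $x$ add a new vertex $x'$ (its clone), and let the hyperedges of $H_{t+1}$ be those of $H_t$ together with all $e-x+x'=(e\setminus\{x\})\cup\{x'\}$ for $e\in E(H_t)$, $x\in e$. The graph process ${\rm ILT}'$: ${\rm ILT}'_0(G)=G$; given ${\rm ILT}'_t(G)$, the graph ${\rm ILT}'_{t+1}(G)$ has vertex set consisting of every vertex $v$ of ${\rm ILT}'_t(G)$ together with a new vertex $v'$ for each such $v$, and edge set consisting of $uv$, $uv'$ and $u'v$ for every edge $uv$ of ${\rm ILT}'_t(G)$ (and no other edges). *)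

From mathcomp Require Import all_boot.
Set Implicit Arguments. Unset Strict Implicit. Unset Printing Implicit Defensive.

(* Vertex types of the iterated constructions: level t+1 = level t + clones,
   with [inl x] the old vertex x and [inr x] its clone x'. *)
Fixpoint iterT (V : finType) (t : nat) : finType :=
  match t with
  | 0 => V
  | t'.+1 => (iterT V t' + iterT V t')%type
  end.

Definition uniform (T : finType) (k : nat) (E : {set {set T}}) : Prop :=
  forall e, e \in E -> #|e| = k.

Definition two_section (T : finType) (E : {set {set T}}) : rel T :=
  fun x y => (x != y) && [exists e in E, (x \in e) && (y \in e)].

Definition ILTH_step (T : finType) (E : {set {set T}}) : {set {set (T + T)%type}} :=
  [set [set (inl y : (T + T)%type) | y in e] | e : {set T} in E] :|:
  [set [set (inl y : (T + T)%type) | y in e :\ x] :|: [set (inr x : (T + T)%type)]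
     | e : {set T} in E, x : T in e].

Fixpoint ILTH (V : finType) (E : {set {set V}}) (t : nat) : {set {set iterT V t}} :=
  match t return {set {set iterT V t}} with
  | 0 => E
  | t'.+1 => @ILTH_step (iterT V t') (@ILTH V E t')
  end.

Definition ILTp_step (T : finType) (adj : rel T) : rel (T + T)%type :=
  fun a b => match a, b with
             | inl u, inl v => adj u v
             | inl u, inr v => adj u v
             | inr u, inl v => adj u v
             | inr _, inr _ => false
             end.

Fixpoint ILTp (V : finType) (adj : rel V) (t : nat) : rel (iterT V t) :=
  match t return rel (iterT V t) with
  | 0 => adj
  | t'.+1 => @ILTp_step (iterT V t') (@ILTp V adj t')
  end.

Arguments ILTH {V} E t.
Arguments ILTp {V} adj t.
Arguments two_section {T} E.
Arguments uniform {T} k E.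

From mathcomp Require Import all_boot.

Set Implicit Arguments.
Unset Strict Implicit.
Unset Printing Implicit Defensive.

(* One ILTH step acts on the 2-section exactly as one ILT' step: the old
   hyperedges reproduce the old edges among old vertices, and e - x + x' joins
   the clone x' precisely to the other vertices of e, i.e. to the neighbours of
   x in e; two clones never share a hyperedge.  Induction on t finishes. *)

Lemma two_sectionC (T : finType) (E : {set {set T}}) (x y : T) :
  two_section E x y = two_section E y x.
Proof.
rewrite /two_section eq_sym; congr (_ && _).
by apply: eq_existsb_in => e _; rewrite andbC.
Qed.

Lemma eq_ILTp_step (T : finType) (adj1 adj2 : rel T) :
  adj1 =2 adj2 -> ILTp_step adj1 =2 ILTp_step adj2.
Proof. by move=> eq_adj [u|u] [v|v] /=. Qed.

Section CloneStep.

Variables (T : finType) (E : {set {set T}}).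

Definition lift_edge (e : {set T}) : {set T + T} := [set inl y | y in e].

Definition clone_edge (e : {set T}) (x : T) : {set T + T} :=
  lift_edge (e :\ x) :|: [set inr x].

Lemma mem_lift_edge e y : (inl y \in lift_edge e) = (y \in e).
Proof. by rewrite mem_imset // => ? ? []. Qed.

Lemma inr_lift_edge e y : (inr y \in lift_edge e) = false.
Proof. by apply/imsetP => -[]. Qed.

Lemma mem_clone_edge_inl e x y : (inl y \in clone_edge e x) = (y \in e :\ x).
Proof. by rewrite in_setU mem_lift_edge in_set1 orbF. Qed.

Lemma mem_clone_edge_inr e x y : (inr y \in clone_edge e x) = (y == x).
Proof. by rewrite in_setU inr_lift_edge in_set1. Qed.

Lemma ILTH_stepP f :
  reflect ((exists2 e, e \in E & f = lift_edge e) \/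
           (exists e x, [/\ e \in E, x \in e & f = clone_edge e x]))
          (f \in ILTH_step E).
Proof.
apply: (iffP setUP) => -[].
- by case/imsetP=> e Ee ->; left; exists e.
- by case/imset2P=> e x Ee xe ->; right; exists e, x.
- by case=> e Ee ->; left; apply: imset_f.
- by case=> e [x [Ee xe ->]]; right; apply/imset2P; exists e x.
Qed.

Lemma two_section_ILTH_step_inl_inl u v :
  two_section (ILTH_step E) (inl u) (inl v) = two_section E u v.
Proof.
rewrite /two_section inj_eq; last by move=> ? ? [].
congr (_ && _); apply/existsP/existsP => [[f]|[e]].
- case/andP=> /ILTH_stepP[[e Ee ->]|[e [x [Ee _ ->]]]].
  + by rewrite !mem_lift_edge => uv_e; exists e; rewrite Ee.
  + rewrite !mem_clone_edge_inl !in_setD1 => /andP[/andP[_ ue] /andP[_ ve]].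
    by exists e; rewrite Ee ue ve.
- case/andP=> Ee uv_e; exists (lift_edge e).
  by rewrite !mem_lift_edge uv_e andbT; apply/ILTH_stepP; left; exists e.
Qed.

Lemma two_section_ILTH_step_inl_inr u v :
  two_section (ILTH_step E) (inl u) (inr v) = two_section E u v.
Proof.
rewrite /two_section /=; apply/existsP/andP => [[f]|[uv /existsP[e]]].
- case/andP=> /ILTH_stepP[[e _ ->]|[e [x [Ee xe ->]]]].
    by rewrite inr_lift_edge andbF.
  rewrite mem_clone_edge_inl mem_clone_edge_inr in_setD1.
  case/andP=> /andP[ux ue] /eqP vx; subst x.
  by split=> //; apply/existsP; exists e; rewrite Ee ue xe.
- case/andP=> Ee /andP[ue ve]; exists (clone_edge e v).
  rewrite mem_clone_edge_inl mem_clone_edge_inr in_setD1 uv ue eqxx !andbT.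
  by apply/ILTH_stepP; right; exists e, v.
Qed.

Lemma two_section_ILTH_step_inr_inr u v :
  two_section (ILTH_step E) (inr u) (inr v) = false.
Proof.
apply/negbTE/andP => -[uv /existsP[f /andP[]]].
case/ILTH_stepP=> [[e _ ->]|[e [x [_ _ ->]]]]; first by rewrite inr_lift_edge.
rewrite !mem_clone_edge_inr => /andP[/eqP ux /eqP vx].
by move: uv; rewrite ux vx eqxx.
Qed.

Lemma ILTp_step_two_section : ILTp_step (two_section E) =2 two_section (ILTH_step E).
Proof.
move=> [u|u] [v|v] /=.
- by rewrite two_section_ILTH_step_inl_inl.
- by rewrite two_section_ILTH_step_inl_inr.
- by rewrite [RHS]two_sectionC two_section_ILTH_step_inl_inr two_sectionC.
- by rewrite two_section_ILTH_step_inr_inr.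
Qed.

End CloneStep.

Theorem lemma2p2 (k : nat) (V : finType) (E : {set {set V}}) :
  2 <= k -> uniform k E ->
  forall t : nat, forall x y : iterT V t,
    ILTp (two_section E) t x y = two_section (ILTH E t) x y.
Proof.
move=> _ _; elim=> [//|t IHt] x y /=.
by rewrite (eq_ILTp_step IHt) ILTp_step_two_section.
Qed.
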